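(* Let $n$ be a positive integer and let $A(n)=(a_{ij})$, $p=p(n)$, $pp=pp(n)$, $b(n)$ be as in the context. Let $m\ge 1$ be an integer such that $\overline{p}=pm$ satisfies $\lfloor \overline{p}/2\rfloor> b(n)$, put $r=\lfloor\overline{p}/2\rfloor$, let $v$ be an integer with $v\ge pp+\overline{p}$, and let $B=(b_{ij})_{1\le i,j\le\overline{p}}$ be the $\overline{p}\times\overline{p}$ matrix with $b_{ij}=a_{v+i,v+j}$ if $i-r\le j\le i+r$; $b_{ij}=a_{v+i,v+j-\overline{p}}$ if $j>i+r$; $b_{ij}=a_{v+i,v+j+\overline{p}}$ if $j<i-r$. Then $B$ is symmetric.
   Context: $\mathbb{N}=\{1,2,3,\dots\}$. Fix a positive integer $n$. The infinite $\{0,1\}$-matrix $A(n)=(a_{ij})_{i,j\in\mathbb{N}}$ is defined recursively. Its entries are determined row by row (row $1$ first), and within each row from left to right, so that $a_{kl}$ is determined after all $a_{ij}$ with $i<k$ and all $a_{kj}$ with $j<l$. One sets $a_{kl}=1$ if and only if all of the following hold: (1) $\sum_{j<l}a_{kj}<n+1$; (2) $\sum_{i<k}a_{il}<n+1$; (3) there is no pair $(i,j)$ with $1\le i<k$, $1\le j<l$ and $a_{ij}=a_{il}=a_{kj}=1$. Otherwise $a_{kl}=0$. The matrix $A(n)$ is eventually periodic along the diagonal: there exist $c\ge0$, $q\ge1$ with $a_{i+q,j+q}=a_{ij}$ for all $i>c$, $j\ge1$. The period $p=p(n)$ is the smallest $q\ge1$ for which such a $c$ exists, and the preperiod $pp=pp(n)$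 is the smallest $c\ge 0$ with $a_{i+p,j+p}=a_{ij}$ for all $i>c$, $j\ge 1$. Define $b(n)=\max\{|j-i| : i,j\ge1,\ a_{ij}=1,\ i>pp(n)\}$. *)

From mathcomp Require Import all_boot all_algebra.
Set Implicit Arguments. Unset Strict Implicit. Unset Printing Implicit Defensive.

(* The infinite 0/1 matrix A(n), indices 1-based.  Internally we build the
   finite top-left K x L block row by row, each row left to right.  Entry
   (k,l) depends only on entries (i,j) with i <= k, j <= l, so computing it
   inside the k x l block gives the same value as in the infinite matrix. *)

(* new entry in column l (0-based) of the row being built, given the
   previous rows [prev] and the already built part [r] of the current row *)
Definition new_entry (n : nat) (prev : seq (seq bool)) (r : seq bool) (l : nat) : bool :=
  [&& count id r < n.+1,
      count (fun row => nth false row l) prev < n.+1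
    & ~~ has (fun row => nth false row l &&
                 has (fun j => nth false row j && nth false r j) (iota 0 l))
             prev].

Fixpoint build_row (n : nat) (prev : seq (seq bool)) (l : nat) : seq bool :=
  match l with
  | 0 => [::]
  | l'.+1 => let r := build_row n prev l' in rcons r (new_entry n prev r l')
  end.

Fixpoint block (n K L : nat) : seq (seq bool) :=
  match K with
  | 0 => [::]
  | K'.+1 => let p := block n K' L in rcons p (build_row n p L)
  end.

(* a n i j = a_{ij} of A(n), for i, j >= 1 (false otherwise) *)
Definition a (n i j : nat) : bool :=
  [&& 0 < i, 0 < j & nth false (nth [::] (block n i j) i.-1) j.-1].

Definition periodic (n q c : nat) : Prop :=
  forall i j, c < i -> 0 < j -> a n (i + q) (j + q) = a n i j.

Definition is_period (n p : nat) : Prop :=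
  [/\ 0 < p, exists c, periodic n p c
    & forall q, 0 < q -> q < p -> ~ (exists c, periodic n q c)].

Definition is_preperiod (n p pp : nat) : Prop :=
  periodic n p pp /\ forall c, c < pp -> ~ periodic n p c.

Definition ndist (i j : nat) : nat := (j - i) + (i - j).

Definition is_b (n pp b : nat) : Prop :=
  (exists i j, [/\ pp < i, 0 < j, a n i j & ndist i j = b]) /\
  (forall i j, pp < i -> 0 < j -> a n i j -> ndist i j <= b).

(* The pbar x pbar matrix B (0-based MathComp indices i, j correspond to
   the paper's 1-based i+1, j+1), r = floor(pbar/2). *)
Definition Bmat (n v pbar : nat) : 'M[bool]_pbar :=
  \matrix_(i < pbar, j < pbar)
    let i' := i.+1 in let j' := j.+1 in let r := pbar./2 in
    if i' + r < j' then a n (v + i') (v + j' - pbar)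
    else if j' + r < i' then a n (v + i') (v + j' + pbar)
    else a n (v + i') (v + j').

(* Entry (k, l) of A(n) is given by a rule that looks only at the
   entries (i, j) with i <= k, j <= l, (i, j) <> (k, l), and this rule is
   invariant under transposition (conditions (1) and (2) swap, condition (3)
   is symmetric in the two indices of its rectangle).  Hence A(n) is the
   unique solution of the rule and is symmetric.  Every entry of B is an entry
   of A(n) shifted along the diagonal by 0 or a multiple of the period; past
   the preperiod such shifts do not change A(n), so b_ji = b_ij follows from
   the symmetry of A(n). *)

From mathcomp Require Import all_boot all_algebra.
From mathcomp Require Import zify.

Definition rule (n : nat) (A : nat -> nat -> bool) (k l : nat) : bool :=
  [&& count (A k) (iota 0 l) < n.+1,
      count (A^~ l) (iota 0 k) < n.+1
    & ~~ has (fun i => A i l && has (fun j => A i j && A k j) (iota 0 l))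
             (iota 0 k)].

Lemma eq_rule n (A B : nat -> nat -> bool) k l :
    (forall i j, i <= k -> j <= l -> i + j < k + l -> A i j = B i j) ->
  rule n A k l = rule n B k l.
Proof.
move=> eqAB; congr [&& _ < _, _ < _ & ~~ _].
- by apply: eq_in_count => j; rewrite mem_iota => /andP[_ ?]; apply: eqAB; lia.
- by apply: eq_in_count => i; rewrite mem_iota => /andP[_ ?]; apply: eqAB; lia.
apply: eq_in_has => i; rewrite mem_iota => /andP[_ ?].
rewrite eqAB; try lia; congr (_ && _).
apply: eq_in_has => j; rewrite mem_iota => /andP[_ ?].
by rewrite !eqAB //; lia.
Qed.

Lemma rule_tr n (A : nat -> nat -> bool) k l :
  rule n (fun i j => A j i) l k = rule n A k l.
Proof.
rewrite /rule andbCA; congr [&& _, _ & ~~ _].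
apply/hasP/hasP => -[x]; rewrite mem_iota => /andP[_ hx] /andP[Axk /hasP[y]];
  rewrite mem_iota => /andP[_ hy] /andP[Ayx Ayl];
  exists y; rewrite ?mem_iota ?Ayl //=;
  by apply/hasP; exists x; rewrite ?mem_iota ?Ayx.
Qed.

Lemma rule_solution_unique n (A B : nat -> nat -> bool) K L :
    (forall k l, k < K -> l < L -> A k l = rule n A k l) ->
    (forall k l, k < K -> l < L -> B k l = rule n B k l) ->
  forall k l, k < K -> l < L -> A k l = B k l.
Proof.
move=> solA solB k l; move: {2}(k + l) (leqnn (k + l)) => s.
elim: s k l => [|s IH] k l hs hk hl; rewrite solA // solB //;
  apply: eq_rule => i j hi hj hij; try lia; apply: IH; lia.
Qed.

Lemma size_build_row n prev l : size (build_row n prev l) = l.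
Proof. by elim: l => //= l IH; rewrite size_rcons IH. Qed.

Lemma nth_build_row n prev l j : j < l ->
  nth false (build_row n prev l) j = new_entry n prev (build_row n prev j) j.
Proof.
elim: l => // l IH; rewrite ltnS leq_eqVlt => /predU1P[-> | hj] /=.
  by rewrite nth_rcons size_build_row ltnn eqxx.
by rewrite nth_rcons size_build_row hj IH.
Qed.

Lemma size_block n K L : size (block n K L) = K.
Proof. by elim: K => //= K IH; rewrite size_rcons IH. Qed.

Lemma nth_block n K L k : k < K ->
  nth [::] (block n K L) k = build_row n (block n k L) L.
Proof.
elim: K => // K IH; rewrite ltnS leq_eqVlt => /predU1P[-> | hk] /=.
  by rewrite nth_rcons size_block ltnn eqxx.
by rewrite nth_rcons size_block hk IH.
Qed.

Definition block_entry n K L k l : bool := nth false (nth [::] (block n K L) k) l.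

Lemma count_iota_nth {T : Type} (x0 : T) (s : seq T) (f : T -> bool) :
  count f s = count (fun i => f (nth x0 s i)) (iota 0 (size s)).
Proof. by rewrite -{1}(mkseq_nth x0 s) count_map. Qed.

Lemma has_iota_nth {T : Type} (x0 : T) (s : seq T) (f : T -> bool) :
  has f s = has (fun i => f (nth x0 s i)) (iota 0 (size s)).
Proof. by rewrite -{1}(mkseq_nth x0 s) has_map. Qed.

Lemma block_entry_rule n K L k l : k < K -> l < L ->
  block_entry n K L k l = rule n (block_entry n K L) k l.
Proof.
move=> hk hl; set P := block n k L.
have row_kE j : j < l -> nth false (build_row n P l) j = block_entry n K L k j.
  by move=> hj; rewrite /block_entry nth_block // !nth_build_row //; lia.
have prevE i : i < k -> nth [::] P i = nth [::] (block n K L) i.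
  by move=> hi; rewrite /P !nth_block //; lia.
rewrite {1}/block_entry nth_block // nth_build_row // /new_entry -/P /rule.
congr [&& _ < _, _ < _ & ~~ _].
- rewrite (count_iota_nth false) size_build_row.
  by apply: eq_in_count => j; rewrite mem_iota => /andP[_ /row_kE].
- rewrite (count_iota_nth [::]) size_block.
  by apply: eq_in_count => i; rewrite mem_iota => /andP[_ /prevE /= ->].
rewrite (has_iota_nth [::]) size_block.
apply: eq_in_has => i; rewrite mem_iota => /andP[_ /prevE /= ->].
congr (_ && _); apply: eq_in_has => j; rewrite mem_iota => /andP[_ hj] /=.
by rewrite row_kE.
Qed.

Lemma block_entry_tr n N k l : k < N -> l < N ->
  block_entry n N N l k = block_entry n N N k l.
Proof.
apply: (@rule_solution_unique n (fun k l => block_entry n N N l k)) => i j hi hj.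
  by rewrite rule_tr block_entry_rule.
exact: block_entry_rule.
Qed.

Lemma a_block_entry n N i j : 0 < i <= N -> 0 < j <= N ->
  a n i j = block_entry n N N i.-1 j.-1.
Proof.
case: i => // i; case: j => // j /= hi hj.
rewrite /a /= -/(block_entry n i.+1 j.+1 i j).
apply: (@rule_solution_unique n _ (block_entry n N N) i.+1 j.+1) => // k l hk hl;
  apply: block_entry_rule; lia.
Qed.

Lemma a_sym n i j : a n i j = a n j i.
Proof.
case: i => [|i]; case: j => [|j] //.
rewrite (@a_block_entry n (i + j).+2) ?(@a_block_entry n (i + j).+2); try lia.
by rewrite block_entry_tr //; lia.
Qed.

Lemma periodic_iter n p c t : periodic n p c -> periodic n (p * t) c.
Proof.
move=> per; elim: t => [|t IH] i j hi hj; first by rewrite muln0 !addn0.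
have shiftS x : x + p * t.+1 = x + p * t + p by rewrite mulnS; lia.
by rewrite !shiftS per ?IH //; lia.
Qed.

Theorem theorem4p2 (n p pp b m v : nat) :
  0 < n -> is_period n p -> is_preperiod n p pp -> is_b n pp b ->
  0 < m -> b < (p * m)./2 -> pp + p * m <= v ->
  ((Bmat n v (p * m))^T)%R = Bmat n v (p * m).
Proof.
move=> _ _ [/(@periodic_iter n p pp m) per _] _ _ _.
set P := p * m in per * => hv.
have shift i j : 0 < i -> 0 < j -> a n (v + j) (v + i - P) = a n (v + i) (v + j + P).
  move=> hi hj; rewrite a_sym -[in RHS](subnK (_ : P <= v + i)); try lia.
  by rewrite per //; lia.
apply/matrixP => i j; rewrite !mxE /=.
case: ltnP => h1; case: ltnP => h2.
- by move: h1 h2; move: (P./2) => r; lia.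
- by rewrite shift.
- by rewrite shift.
- exact: a_sym.
Qed.
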